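(* Consider $n$ scalar states $x_i(t)\in\mathbb{R}$, $t\in\mathbb{Z}_{\ge0}$, updated synchronously by $$x_i(t+1)=x_i(t)+\frac{1}{1+n_i}\sum_{j\in\mathcal{N}_i}\big(x_j(t-T_{ji})-x_i(t)\big),\qquad i=1,\dots,n,$$ where the neighbor sets $\mathcal{N}_i$ are fixed, the neighbor relation is symmetric ($j\in\mathcal{N}_i\iff i\in\mathcal{N}_j$), the resulting undirected graph is connected, $n_i=|\mathcal{N}_i|\ge1$, and the delays $T_{ji}\in\mathbb{Z}_{\ge0}$ are constant (possibly different for different links and for the two directions of a link), with arbitrary initial values $x_i(s)$ for $s\le 0$. Then, regardless of the values of the delays, $x_i(t)-x_j(t)\to0$ as $t\to\infty$ for all $i,j$. *)

From HB Require Import structures.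
From mathcomp Require Import all_boot all_order all_algebra.
From mathcomp Require Import all_classical all_reals all_analysis.
Set Implicit Arguments. Unset Strict Implicit. Unset Printing Implicit Defensive.
Import Order.TTheory GRing.Theory Num.Theory.
Local Open Scope ring_scope.

Definition nbr_count (n : nat) (e : rel 'I_n) (i : 'I_n) : nat :=
  #|[pred j | e i j]|.

(* The delayed consensus update, for every time t >= 0 (time is an integer,
   values at times s <= 0 are arbitrary initial values):
   x_i(t+1) = x_i(t) + 1/(1+n_i) * sum_{j in N_i} (x_j(t - T_ji) - x_i(t)). *)
Definition delayed_consensus (R : realType) (n : nat) (e : rel 'I_n)
  (T : 'I_n -> 'I_n -> nat) (x : 'I_n -> int -> R) : Prop :=
  forall (i : 'I_n) (t : nat),
    x i (t%:Z + 1) =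
      x i t%:Z + (1 + (nbr_count e i)%:R)^-1 *
        \sum_(j | e i j) (x j (t%:Z - (T j i)%:Z) - x i t%:Z).

From HB Require Import structures.
From mathcomp Require Import all_boot all_order all_algebra.
From mathcomp Require Import all_classical all_reals all_analysis.
From mathcomp Require Import ring lra zify.
Set Implicit Arguments. Unset Strict Implicit. Unset Printing Implicit Defensive.
Import Order.TTheory GRing.Theory Num.Theory.
Local Open Scope ring_scope.
Local Open Scope classical_set_scope.

(** Let D bound all delays and look at the minimum [m t] and maximum [M t] of
    all values over the window of times [t - D, ..., t].  Each update is a
    convex combination of values from the current window, so [m] never
    decreases and [M] never increases.  If some agent exceeds [m t] by [h] at
    time [t], the excess decays at most geometrically (rate [1/(1+n)] per step)
    and spreads to a neighbour within [D+1] steps; by connectivity, after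
    [K = n(D+1) + D] steps every value in the window exceeds [m t] by a fixed
    fraction of [h].  Applying this (or its mirror image for the maximum) to an
    agent that is far from [m t] or from [M t] shows that [M - m] shrinks by a
    constant factor every [K] steps, hence tends to 0. *)

Lemma cvg0_geometric_envelope (R : realType) (f d : nat -> R) (K : nat) (r : R) :
  (forall t, `|f t| <= d t) -> (forall s t, (s <= t)%N -> d t <= d s) ->
  0 <= r < 1 -> (forall N, d (N * K + K)%N <= r * d (N * K)%N) ->
  f @ \oo --> 0.
Proof.
move=> f_le d_nonincr /andP[r_ge0 r_lt1] d_contr.
have d_ge0 t : 0 <= d t by exact: le_trans (f_le t).
have dK N : d (N * K)%N <= r ^+ N * d 0%N.
  elim: N => [|N IH]; first by rewrite mul0n expr0 mul1r.
  by rewrite mulSnr (le_trans (d_contr N)) // exprS -mulrA ler_wpM2l.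
have geo0 : (fun N : nat => r ^+ N * d 0%N : R) @ \oo --> 0.
  rewrite -(mul0r (d 0%N)); apply: cvgMr_tmp.
  by apply: cvg_expr; rewrite ger0_norm.
apply/cvgrPdist_le => eps eps0.
move/cvgrPdist_le: geo0 => /(_ eps eps0) [N _ HN].
apply: filterS (nbhs_infty_ge (N * K)) => t NKt.
move: (HN N (leqnn N)); rewrite !sub0r !normrN ger0_norm ?mulr_ge0 ?exprn_ge0 //.
by apply: le_trans; rewrite (le_trans (f_le t)) // (le_trans (d_nonincr _ _ NKt)).
Qed.

Section DelayedConsensus.
Variables (R : realType) (n : nat) (e : rel 'I_n) (T : 'I_n -> 'I_n -> nat).
Variable D : nat.
Hypothesis T_le : forall i j, (T i j <= D)%N.
Hypothesis e_sym : symmetric e.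
Hypothesis e_conn : forall i j : 'I_n, connect e i j.

Definition gain i : R := (1 + (nbr_count e i)%:R)^-1.

Lemma gain_gt0 i : 0 < gain i.
Proof. by rewrite /gain invr_gt0 ltr_wpDr. Qed.

Definition gain_min : R := (1 + n%:R)^-1.

Lemma gain_min_gt0 : 0 < gain_min.
Proof. by rewrite /gain_min invr_gt0 ltr_wpDr. Qed.

Lemma gain_min_le1 : gain_min <= 1.
Proof. by rewrite /gain_min invf_le1 ?ler_wpDr ?ltr_wpDr. Qed.

Lemma gain_min_le i : gain_min <= gain i.
Proof.
rewrite /gain_min /gain lef_pV2 ?posrE ?ltr_wpDr // lerD2l ler_nat.
by rewrite /nbr_count (leq_trans (max_card _)) ?card_ord.
Qed.

Lemma delayed_consensus_subE x c i (t : nat) : delayed_consensus e T x ->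
  x i (t%:Z + 1) - c = gain i * ((x i t%:Z - c) +
     \sum_(j | e i j) (x j (t%:Z - (T j i)%:Z) - c)).
Proof.
move=> hx; rewrite hx /gain.
have -> : \sum_(j | e i j) (x j (t%:Z - (T j i)%:Z) - x i t%:Z) =
    \sum_(j | e i j) (x j (t%:Z - (T j i)%:Z) - c)
    - \sum_(j | e i j) (x i t%:Z - c).
  by rewrite -sumrB; apply: eq_bigr => j _; ring.
rewrite sumr_const /nbr_count -mulr_natr.
have : (1 + #|[pred j | e i j]|%:R : R) != 0 by rewrite lt0r_neq0 // ltr_pwDl.
by move=> ?; field.
Qed.

Section Trajectory.
Variables (x : 'I_n -> int -> R) (hx : delayed_consensus e T x).

Definition window_lb c (t : nat) :=
  forall i (k : nat), (k <= D)%N -> c <= x i (t%:Z - k%:Z).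

Lemma window_lbD c t d : window_lb c t -> window_lb c (t + d).
Proof.
move=> lb_t; elim: d => [|d IH]; first by rewrite addn0.
move=> i [|k] k_le.
- rewrite (_ : _ - _ = (t + d)%N%:Z + 1); last by lia.
  rewrite -subr_ge0 delayed_consensus_subE // mulr_ge0 ?(ltW (gain_gt0 _)) //.
  rewrite addr_ge0 //.
    by rewrite subr_ge0 -[X in x i X]subr0 IH.
  by apply: sumr_ge0 => j _; rewrite subr_ge0 IH.
- rewrite (_ : _ - _ = (t + d)%N%:Z - k%:Z); last by lia.
  exact/IH/ltnW.
Qed.

Lemma window_lb_le c t :
  window_lb c t -> forall i (s : nat), (t <= s)%N -> c <= x i s%:Z.
Proof.
move=> lb_t i s ts; have := window_lbD (s - t) lb_t i (leq0n D).
by rewrite subnKC // subr0.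
Qed.

Section Propagation.
Variables (c : R) (t0 : nat) (i0 : 'I_n).
Hypothesis lb_t0 : window_lb c t0.
Let h := x i0 t0%:Z - c.

Definition lifted k i := forall s : nat, (t0 + k * D.+1 <= s)%N ->
  h * gain_min ^+ (s - t0) <= x i s%:Z - c.

Lemma excess_ge0 : 0 <= h.
Proof. by rewrite /h subr_ge0 (window_lb_le lb_t0). Qed.

Lemma decayed_excess_ge0 m : 0 <= h * gain_min ^+ m.
Proof. by rewrite mulr_ge0 ?excess_ge0 ?exprn_ge0 ?ltW ?gain_min_gt0. Qed.

Lemma excess_step i (s : nat) (a : R) : (t0 <= s)%N -> 0 <= a ->
  a <= (x i s%:Z - c) + \sum_(j | e i j) (x j (s%:Z - (T j i)%:Z) - c) ->
  a * gain_min <= x i (s%:Z + 1) - c.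
Proof.
move=> t0s a_ge0 a_le; rewrite delayed_consensus_subE // mulrC.
by apply: ler_pM => //; [exact/ltW/gain_min_gt0 | exact: gain_min_le].
Qed.

Lemma nbr_excess_ge0 i (s : nat) j : (t0 <= s)%N ->
  0 <= x j (s%:Z - (T j i)%:Z) - c.
Proof.
move=> t0s; have := window_lbD (s - t0) lb_t0 j (T_le j i).
by rewrite subnKC // subr_ge0.
Qed.

Lemma lifted0 : lifted 0 i0.
Proof.
move=> s; rewrite mul0n addn0 => t0s; rewrite -(subnKC t0s).
elim: (s - t0)%N => [|d IH]; first by rewrite addn0 subnn expr0 mulr1.
rewrite addnS (_ : (t0 + d).+1%:Z = (t0 + d)%N%:Z + 1); last by lia.
rewrite (_ : ((t0 + d).+1 - t0)%N = d.+1); last by lia.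
rewrite exprSr mulrA; apply: excess_step; rewrite ?leq_addr ?decayed_excess_ge0 //.
rewrite -[X in X <= _]addr0; apply: lerD; first by rewrite addKn in IH.
by apply: sumr_ge0 => j _; rewrite nbr_excess_ge0 ?leq_addr.
Qed.

Lemma lifted_edge k a b : e b a -> lifted k a -> lifted k.+1 b.
Proof.
move=> eba lift_a s; rewrite mulSn => s_ge; have Tab_le := T_le a b.
pose s1 := s.-1; pose s' := (s1 - T a b)%N.
rewrite (_ : s%:Z = s1%:Z + 1); last by rewrite /s1; lia.
rewrite (_ : (s - t0 = (s1 - t0).+1)%N); last by rewrite /s1; lia.
rewrite exprSr mulrA; apply: excess_step; rewrite ?decayed_excess_ge0 //.
  by rewrite /s1; lia.
have decay_le : h * gain_min ^+ (s1 - t0) <= h * gain_min ^+ (s' - t0).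
  rewrite ler_wpM2l ?excess_ge0 // ler_wiXn2l ?gain_min_le1 ?ltW ?gain_min_gt0 //.
  by rewrite /s'; lia.
have lift_s' := lift_a s' ltac:(rewrite /s' /s1; lia).
rewrite -[X in X <= _]add0r; apply: lerD.
- by rewrite subr_ge0 (window_lb_le lb_t0) // /s1; lia.
- rewrite (bigD1 a) //= (_ : s1%:Z - (T a b)%:Z = s'%:Z); last first.
    by rewrite /s' /s1; lia.
  rewrite -[X in X <= _]addr0; apply: lerD; first exact: le_trans decay_le _.
  by apply: sumr_ge0 => j _; rewrite nbr_excess_ge0 // /s1; lia.
Qed.

Lemma lifted_mono k k' i : (k <= k')%N -> lifted k i -> lifted k' i.
Proof.
move=> kk' lift_k s s_ge; apply: lift_k; apply: leq_trans s_ge.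
by rewrite leq_add2l leq_mul2r kk' orbT.
Qed.

Lemma lifted_path p a k :
  path e a p -> lifted k a -> lifted (k + size p) (last a p).
Proof.
elim: p a k => [|b p IH] a k /=; first by rewrite addn0.
move=> /andP[eab pab] lift_a; rewrite addnS -addSn; apply: IH => //.
by apply: lifted_edge lift_a; rewrite e_sym.
Qed.

Lemma lifted_all j : lifted n j.
Proof.
have /connectP[p pp ->] := e_conn i0 j; case: (shortenP pp) => p' pp' up' _.
apply: lifted_mono (lifted_path pp' lifted0); rewrite add0n.
by have := max_card [in i0 :: p']; rewrite card_ord (card_uniqP up'); apply: ltnW.
Qed.

End Propagation.
End Trajectory.

Section Extrema.
Variable i0 : 'I_n.

Definition window_min x (t : nat) : R :=
  \big[Order.min/x i0 t%:Z]_(p : 'I_n * 'I_D.+1) x p.1 (t%:Z - (p.2 : nat)%:Z).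

Definition opp_traj (x : 'I_n -> int -> R) i s := - x i s.

Definition window_max x t := - window_min (opp_traj x) t.

Definition spread x t := window_max x t - window_min x t.

Lemma opp_trajK : involutive opp_traj.
Proof.
by move=> x; apply/funext => i; apply/funext => s; rewrite /opp_traj opprK.
Qed.

Lemma delayed_consensus_opp x :
  delayed_consensus e T x -> delayed_consensus e T (opp_traj x).
Proof.
move=> hx i t; rewrite /opp_traj hx opprD -mulrN -sumrN.
by congr (_ + _ * _); apply: eq_bigr => j _; rewrite opprB opprK addrC.
Qed.

Lemma window_min_lb x t : window_lb x (window_min x t) t.
Proof.
by move=> i k k_le; exact: (bigmin_le _ (i, Ordinal (k_le : k < D.+1)%N)).
Qed.

Lemma le_window_max x t i k : (k <= D)%N -> x i (t%:Z - k%:Z) <= window_max x t.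
Proof. by move=> k_le; rewrite lerNr; apply: (window_min_lb (opp_traj x)). Qed.

Lemma window_min_ge x c t : window_lb x c t -> c <= window_min x t.
Proof.
move=> lb; apply: le_bigmin; first by rewrite -[X in x i0 X]subr0 lb.
by move=> [i k] _; apply: lb; rewrite -ltnS.
Qed.

Lemma window_min_opp x t : window_min (opp_traj x) t = - window_max x t.
Proof. by rewrite opprK. Qed.

Lemma window_max_opp x t : window_max (opp_traj x) t = - window_min x t.
Proof. by rewrite /window_max opp_trajK. Qed.

Lemma abs_sub_le_spread x i j (t : nat) : `|x i t%:Z - x j t%:Z| <= spread x t.
Proof.
have le_max k : x k t%:Z <= window_max x t by rewrite -[t%:Z]subr0 le_window_max.
have min_le k : window_min x t <= x k t%:Z.
  by rewrite -[t%:Z]subr0; apply: window_min_lb.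
have := le_max i; have := le_max j; have := min_le i; have := min_le j.
by rewrite ler_norml /spread => *; apply/andP; split; lra.
Qed.

Lemma window_min_nondecr x t d :
  delayed_consensus e T x -> window_min x t <= window_min x (t + d).
Proof. by move=> hx; apply/window_min_ge/(window_lbD hx)/window_min_lb. Qed.

Lemma window_max_nonincr x t d :
  delayed_consensus e T x -> window_max x (t + d) <= window_max x t.
Proof.
by move=> hx; rewrite lerN2; apply/window_min_nondecr/delayed_consensus_opp.
Qed.

Lemma spread_nonincr x s t : delayed_consensus e T x ->
  (s <= t)%N -> spread x t <= spread x s.
Proof.
move=> hx st; rewrite /spread -(subnKC st).
by apply: lerB; [exact: window_max_nonincr | exact: window_min_nondecr].
Qed.

Lemma spread_ge0 x t : 0 <= spread x t.
Proof. by have := abs_sub_le_spread x i0 i0 t; rewrite subrr normr0. Qed.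

Lemma spread_opp x t : spread (opp_traj x) t = spread x t.
Proof. by rewrite /spread window_max_opp window_min_opp opprK addrC. Qed.

Definition epoch := (n * D.+1 + D)%N.

Lemma window_min_gain x (t0 : nat) : delayed_consensus e T x ->
  spread x t0 / 2 <= x i0 t0%:Z - window_min x t0 ->
  window_min x t0 + spread x t0 / 2 * gain_min ^+ epoch
    <= window_min x (t0 + epoch).
Proof.
move=> hx far_from_min; apply: window_min_ge => i k k_le.
have s_ge : (t0 + n * D.+1 <= t0 + epoch - k)%N by rewrite /epoch; lia.
have := lifted_all hx i0 (window_min_lb x t0) i s_ge.
rewrite (_ : (t0 + epoch)%N%:Z - k%:Z = (t0 + epoch - k)%N%:Z); last first.
  by rewrite /epoch; lia.
rewrite -lerBrDl; apply: le_trans; apply: ler_pM => //.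
- by rewrite divr_ge0 ?spread_ge0.
- by rewrite exprn_ge0 ?ltW ?gain_min_gt0.
- by rewrite ler_wiXn2l ?gain_min_le1 ?ltW ?gain_min_gt0 //; lia.
Qed.

Lemma window_max_drop x (t0 : nat) : delayed_consensus e T x ->
  spread x t0 / 2 <= window_max x t0 - x i0 t0%:Z ->
  window_max x (t0 + epoch)
    <= window_max x t0 - spread x t0 / 2 * gain_min ^+ epoch.
Proof.
move=> hx far_from_max.
have := window_min_gain (t0 := t0) (delayed_consensus_opp hx).
rewrite !spread_opp !window_min_opp /opp_traj opprK addrC => /(_ far_from_max).
by rewrite lerNr opprD opprK.
Qed.

Lemma spread_contract x (t0 : nat) : delayed_consensus e T x ->
  spread x (t0 + epoch) <= (1 - gain_min ^+ epoch / 2) * spread x t0.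
Proof.
move=> hx; have min_up := window_min_nondecr t0 epoch hx.
have max_down := window_max_nonincr t0 epoch hx.
have [far_from_min|near_min] :=
  lerP (spread x t0 / 2) (x i0 t0%:Z - window_min x t0).
  have := window_min_gain hx far_from_min.
  rewrite /spread; set q := gain_min ^+ epoch.
  set M := window_max x t0; set m := window_min x t0.
  have -> : (1 - q / 2) * (M - m) = M - (m + (M - m) / 2 * q) by ring.
  by move: max_down; rewrite -/M; lra.
have far_from_max : spread x t0 / 2 <= window_max x t0 - x i0 t0%:Z.
  by move: near_min; rewrite /spread; lra.
have := window_max_drop hx far_from_max.
rewrite /spread; set q := gain_min ^+ epoch.
set M := window_max x t0; set m := window_min x t0.
have -> : (1 - q / 2) * (M - m) = (M - (M - m) / 2 * q) - m by ring.
by move: min_up; rewrite -/m; lra.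
Qed.

End Extrema.
End DelayedConsensus.

Theorem theorem5 (R : realType) (n : nat) (e : rel 'I_n)
  (T : 'I_n -> 'I_n -> nat) (x : 'I_n -> int -> R)
  (e_sym : symmetric e) (e_irr : irreflexive e)
  (e_conn : forall i j : 'I_n, connect e i j)
  (e_deg : forall i : 'I_n, (0 < nbr_count e i)%N)
  (hx : delayed_consensus e T x) :
  forall i j : 'I_n, (fun t : nat => x i t%:Z - x j t%:Z : R) @ \oo --> 0.
Proof.
move=> i j; pose D := (\max_(p : 'I_n * 'I_n) T p.1 p.2)%N.
have T_le a b : (T a b <= D)%N.
  exact: (@leq_bigmax _ (fun p : 'I_n * 'I_n => T p.1 p.2) (a, b)).
clearbody D.
have q_gt0 : 0 < gain_min R n ^+ epoch n D by rewrite exprn_gt0 ?gain_min_gt0.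
have q_le1 : gain_min R n ^+ epoch n D <= 1.
  by rewrite exprn_ile1 ?gain_min_le1 ?ltW ?gain_min_gt0.
apply: (cvg0_geometric_envelope (K := epoch n D)
  (r := 1 - gain_min R n ^+ epoch n D / 2) (abs_sub_le_spread D i x i j)).
- by move=> s t; exact: spread_nonincr.
- by apply/andP; split; lra.
- by move=> N; exact: spread_contract.
Qed.
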